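(* Let $D$ be a digraph without parallel edges, let $X\subseteq E(D)$, let $S$ be a set with $|S|=k$, and let $\lambda_1:E(D)\setminus X\to S$ and $\lambda_2:X\to S$. If $(E(D)\setminus X, X)$, viewed as a partition of the vertex set of $\vec{L}(D)$, is $(\lambda_1,\lambda_2)$-consistent in $\vec{L}(D)$, then $|S^V_X|\le 4k$.
   Context: All digraphs are finite and loopless. The directed line graph $\vec{L}(D)$ has vertex set $E(D)$ and an edge $\vec{ef}$ whenever $e=\vec{wx}$ and $f=\vec{xy}$ for some vertices $w,x,y$ of $D$. For $X\subseteq E(D)$, $S^V_X=\{y\in V(D): \exists x,z \text{ with } \vec{xy}\in E(D)\setminus X \text{ and } \vec{yz}\in X\}$. For a digraph $H$, a partition $(A,B)$ of $V(H)$ and functions $\lambda_A:A\to S$, $\lambda_B:B\to S$, $(A,B)$ is $(\lambda_A,\lambda_B)$-consistent if (i) for all $a_1,a_2\in A$ with $\lambda_A(a_1)=\lambda_A(a_2)$ and all $b\in B$: $\vec{a_1b}\in E(H)$ iff $\vec{a_2b}\in E(H)$; and (ii) for all $b_1,b_2\in B$ with $\lambda_B(b_1)=\lambda_B(b_2)$ and all $a\in A$: $\vec{ab_1}\in E(H)$ iff $\vec{ab_2}\in E(H)$. *)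

From mathcomp Require Import all_boot.
Set Implicit Arguments. Unset Strict Implicit. Unset Printing Implicit Defensive.

(* A finite digraph without parallel edges on the vertex type V is given by
   its edge relation [e : rel V]; the edge set E(D) is the set of ordered
   pairs (x, y) with [e x y].  Looplessness is [irreflexive e]. *)

Definition edges (V : finType) (e : rel V) : {set V * V} :=
  [set p | e p.1 p.2].

Definition line_adj (V : finType) (e : rel V) : rel (V * V) :=
  fun p q => [&& e p.1 p.2, e q.1 q.2 & p.2 == q.1].

Definition SVX (V : finType) (e : rel V) (X : {set V * V}) : {set V} :=
  [set y | [exists x, exists z,
     ((x, y) \in edges e :\: X) && ((y, z) \in X)]].

(* (A,B) is (lA,lB)-consistent in the digraph H with vertex type T and
   adjacency relation adjH.  The labelling functions are total functions,
   but only their values on A (resp. B) are ever used. *)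
Definition consistent (T S : Type) (adjH : rel T) (A B : pred T)
  (lA lB : T -> S) : Prop :=
  (forall a1 a2 b, a1 \in A -> a2 \in A -> b \in B -> lA a1 = lA a2 ->
     adjH a1 b = adjH a2 b) /\
  (forall b1 b2 a, b1 \in B -> b2 \in B -> a \in A -> lB b1 = lB b2 ->
     adjH a b1 = adjH a b2).

From mathcomp Require Import all_boot.

Set Implicit Arguments.
Unset Strict Implicit.
Unset Printing Implicit Defensive.

(* We prove the stronger bound |S^V_X| <= k.  Every y in S^V_X
   is the head of some edge of E(D) \ X; choose one such edge a_y and label y
   by lam1(a_y).  This labelling is injective on S^V_X: if lam1(a_y) =
   lam1(a_y'), pick an X-edge f = (y, z) leaving y.  In the line graph a_y
   points to f, so by consistency condition (i) a_y' points to f as well,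
   i.e. the head y' of a_y' equals the tail y of f.  Hence S^V_X injects
   into S, and |S^V_X| <= |S| = k <= 4k. *)

Section HeadLabelling.

Variables (V S : finType) (e : rel V) (X : {set V * V}) (lam1 lam2 : V * V -> S).

Hypothesis sub_XE : X \subset edges e.
Hypothesis cons : consistent (line_adj e) (mem (edges e :\: X)) (mem X) lam1 lam2.

(* Two non-X edges with the same lam1-label have the same head, as soon as
   the head of the first one is the tail of an X-edge: both must point to
   that X-edge in the line graph. *)
Lemma consistent_same_head (a b : V * V) (z : V) :
  a \in edges e :\: X -> b \in edges e :\: X -> (a.2, z) \in X ->
  lam1 a = lam1 b -> b.2 = a.2.
Proof.
move=> aA bA fX lab.
have fE : (a.2, z) \in edges e by exact: (subsetP sub_XE).
have := cons.1 a b (a.2, z) aA bA fX lab.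
move: aA bA fE; rewrite !inE /line_adj /=.
by move=> /andP[_ ->] /andP[_ ->] ->; rewrite eqxx => /esym /eqP.
Qed.

(* The label of a vertex y: the lam1-label of a chosen non-X edge entering y
   (the default value is irrelevant, since every y in S^V_X has such an
   edge). *)
Definition head_label (y : V) : S :=
  if [pick x | (x, y) \in edges e :\: X] is Some x then lam1 (x, y)
  else lam1 (y, y).

Lemma SVXP (y : V) :
  y \in SVX e X ->
  exists x z, (x, y) \in edges e :\: X /\ (y, z) \in X.
Proof.
by rewrite inE => /existsP[x /existsP[z /andP[ax yz]]]; exists x, z.
Qed.

Lemma head_labelP (y : V) :
  y \in SVX e X -> exists2 x, (x, y) \in edges e :\: X & head_label y = lam1 (x, y).
Proof.
case/SVXP=> x [z [xy _]]; rewrite /head_label.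
by case: pickP => [u uy | /(_ x)]; [exists u | rewrite xy].
Qed.

Lemma head_label_inj : {in SVX e X &, injective head_label}.
Proof.
move=> y y' yS y'S.
have [x xy ->] := head_labelP yS; have [x' xy' ->] := head_labelP y'S.
have [_ [z [_ yz]]] := SVXP yS.
move=> lab; exact: esym (consistent_same_head xy xy' yz lab).
Qed.

Lemma card_SVX_le : #|SVX e X| <= #|S|.
Proof.
by rewrite -(card_in_imset head_label_inj); apply: max_card.
Qed.

End HeadLabelling.

Theorem mainTheorem3 (V : finType) (e : rel V) (X : {set V * V})
  (S : finType) (k : nat) (lam1 lam2 : V * V -> S) :
  irreflexive e ->
  X \subset edges e ->
  #|S| = k ->
  consistent (line_adj e) (mem (edges e :\: X)) (mem X) lam1 lam2 ->
  #|SVX e X| <= 4 * k.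
Proof.
move=> _ sub_XE cardS cons.
apply: leq_trans (card_SVX_le sub_XE cons) _.
by rewrite cardS leq_pmull.
Qed.
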